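(* Every integer $n\ge 2$ is a cutoff.
   Context: For a real number $\alpha\ge 1$, define the integer sequence $(P^\alpha_i)_{i\ge 0}$ by $P^\alpha_0=0$, $P^\alpha_1=1$, and for $k\ge 1$, $P^\alpha_{k+1}=P^\alpha_k+P^\alpha_j$, where $j\ge1$ is the unique index with $\alpha P^\alpha_{j-1}<P^\alpha_k\le \alpha P^\alpha_j$. A cutoff is a real number $\alpha\ge 1$ such that for every real $\beta$ with $1\le\beta<\alpha$, the sequences $(P^\alpha_i)$ and $(P^\beta_i)$ are not identical. *)

From Stdlib Require Import Reals List Arith.
Import ListNotations.
Open Scope R_scope.

Definition in_window (alpha : R) (a p b : nat) : bool :=
  if Rlt_dec (alpha * INR a) (INR p) then
    (if Rle_dec (INR p) (alpha * INR b) then true else false)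
  else false.

(* Given the list l = [P_0; ...; P_k] (k >= 1), the index j >= 1 with
   alpha * P_{j-1} < P_k <= alpha * P_j.  Such j necessarily lies in 1..k
   when alpha >= 1 (and is unique since the sequence is increasing);
   we search j in 1..k and return the first one (0 if none, which never
   happens for alpha >= 1). *)
Definition P_index (alpha : R) (l : list nat) : nat :=
  let k := pred (length l) in
  let pk := nth k l 0%nat in
  match find (fun j => in_window alpha (nth (pred j) l 0%nat) pk (nth j l 0%nat))
             (seq 1 k) with
  | Some j => j
  | None => 0%nat
  end.

(* P_list alpha k = [P_0; P_1; ...; P_{k+1}] *)
Fixpoint P_list (alpha : R) (k : nat) : list nat :=
  match k with
  | O => [0%nat; 1%nat]
  | S k' =>
      let l := P_list alpha k' in
      let pk := nth (pred (length l)) l 0%nat in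
      l ++ [(pk + nth (P_index alpha l) l 0%nat)%nat]
  end.

Definition P (alpha : R) (i : nat) : nat := nth i (P_list alpha i) 0%nat.

Definition cutoff (alpha : R) : Prop :=
  1 <= alpha /\
  forall beta : R, 1 <= beta < alpha -> ~ (forall i : nat, P alpha i = P beta i).

(** For [k <= alpha] the sequence [P^alpha] starts [0, 1, ..., k + 1]: as long as
    [P_k = k <= alpha = alpha * P_1], the index [j = 1] is chosen and the sequence
    grows by one.  If [1 <= beta < n] and [m = floor beta], then [P^beta_(m+1) = m + 1]
    exceeds [beta * P_1], so the index chosen at that step is not [1] and
    [P^beta_(m+2) <> m + 2 = P^n_(m+2)]. *)

From Stdlib Require Import Reals Lra Lia List.
Open Scope R_scope.

Lemma length_P_list (a : R) (k : nat) : length (P_list a k) = S (S k).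
Proof.
  induction k as [|k IHk]; simpl; [reflexivity|].
  rewrite length_app, IHk; simpl; lia.
Qed.

Lemma P_succ (a : R) (i : nat) : P a (S i) = nth (S i) (P_list a i) 0%nat.
Proof.
  unfold P; simpl.
  rewrite app_nth1; [reflexivity|].
  rewrite length_P_list; lia.
Qed.

Lemma nth_seq0_eq1 (i n : nat) : nth i (seq 0 n) 0%nat = 1%nat -> i = 1%nat.
Proof.
  destruct (Nat.lt_ge_cases i n) as [Hi|Hi].
  - rewrite seq_nth by exact Hi; lia.
  - rewrite nth_overflow by (rewrite length_seq; exact Hi); discriminate.
Qed.

Lemma in_window_0_1 (a : R) (p : nat) :
  in_window a 0 p 1 = true <-> 0 < INR p <= a.
Proof.
  unfold in_window; simpl INR.
  rewrite Rmult_0_r, Rmult_1_r.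
  destruct (Rlt_dec 0 (INR p)); destruct (Rle_dec (INR p) a);
    split; intros H; solve [reflexivity | discriminate | lra].
Qed.

(* The candidate indices are [1, ..., k + 1]; if [1] is rejected, the answer is
   at least [2] or the junk value [0]. *)
Lemma P_index_seq_eq1 (a : R) (k : nat) :
  P_index a (seq 0 (S (S k))) = 1%nat <-> INR (S k) <= a.
Proof.
  unfold P_index; cbv beta zeta.
  rewrite length_seq, seq_nth, Nat.add_0_l by lia; cbn [Init.Nat.pred].
  change (seq 1 (S k)) with (1%nat :: seq 2 k); cbn [find Init.Nat.pred].
  change (nth 0 (seq 0 (S (S k))) 0%nat) with 0%nat.
  change (nth 1 (seq 0 (S (S k))) 0%nat) with 1%nat.
  destruct (in_window a 0 (S k) 1) eqn:W.
  - apply in_window_0_1 in W; split; [lra|reflexivity].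
  - split.
    + destruct (find _ (seq 2 k)) as [j|] eqn:F; [|discriminate].
      apply find_some, proj1, in_seq in F; lia.
    + intros Ha.
      assert (Hw : in_window a 0 (S k) 1 = true)
        by (apply in_window_0_1; pose proof (pos_INR k); rewrite S_INR in *; lra).
      congruence.
Qed.

Lemma P_list_seq (a : R) (k : nat) : INR k <= a -> P_list a k = seq 0 (S (S k)).
Proof.
  induction k as [|k IHk]; intros Hk; [reflexivity|].
  cbn [P_list]; rewrite IHk by (rewrite S_INR in Hk; lra).
  rewrite length_seq, seq_nth by lia; cbn [pred].
  rewrite (proj2 (P_index_seq_eq1 a k) Hk), (seq_S (S (S k))).
  change (nth 1 (seq 0 (S (S k))) 0%nat) with 1%nat.
  replace (0 + S k + 1)%nat with (0 + S (S k))%nat by lia; reflexivity.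
Qed.

Lemma P_eq_id (a : R) (i : nat) : INR i <= a + 1 -> P a i = i.
Proof.
  destruct i as [|k]; intros Hi; [reflexivity|].
  rewrite P_succ, P_list_seq by (rewrite S_INR in Hi; lra).
  rewrite seq_nth by lia; reflexivity.
Qed.

Lemma P_neq_id_at_floor (b : R) (m : nat) :
  INR m <= b < INR (S m) -> P b (S (S m)) <> S (S m).
Proof.
  intros [Hm Hb] HP.
  rewrite P_succ in HP; cbn [P_list] in HP.
  rewrite P_list_seq in HP by exact Hm.
  rewrite length_seq, app_nth2, length_seq, Nat.sub_diag in HP
    by (rewrite length_seq; lia).
  cbn [nth pred] in HP; rewrite seq_nth in HP by lia.
  assert (Hidx : P_index b (seq 0 (S (S m))) = 1%nat)
    by (apply nth_seq0_eq1 with (n := S (S m)); lia).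
  apply P_index_seq_eq1 in Hidx; lra.
Qed.

Lemma exists_floor (b : R) (n : nat) :
  0 <= b -> b < INR n -> exists m, (S m <= n)%nat /\ INR m <= b < INR (S m).
Proof.
  intros Hb; induction n as [|k IHk]; intros Hn; [simpl in Hn; lra|].
  destruct (Rlt_dec b (INR k)) as [Hk|Hk].
  - destruct (IHk Hk) as [m [Hmk Hm]]; exists m; split; [lia|exact Hm].
  - exists k; split; [lia|lra].
Qed.

Theorem mainTheorem10 : forall n : nat, (2 <= n)%nat -> cutoff (INR n).
Proof.
  intros n Hn; split; [apply (le_INR 1); lia|].
  intros beta [Hbeta1 Hbeta_n] Hsame.
  destruct (exists_floor beta n) as [m [Hmn Hfloor]]; [lra|exact Hbeta_n|].
  apply (P_neq_id_at_floor beta m Hfloor).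
  rewrite <- Hsame; apply P_eq_id.
  rewrite S_INR; apply Rplus_le_compat_r, le_INR; exact Hmn.
Qed.
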